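(* Let $n\ge 0$ be an integer, $\alpha=-\frac{1}{2n+2}$, and for $k\in\mathbb{Z}_+$ let $$v_k(t)=e^{-\frac{t^{2n+2}}{2n+2}}L^{(\alpha)}_{k}\!\left(\frac{t^{2n+2}}{n+1}\right),$$ with the convention $v_\ell\equiv0$ for $\ell<0$. Then $$t\frac{d}{dt}v_k(t)=(n+1)\big((k+1)v_{k+1}(t)-(1+\alpha)v_k(t)-(k+\alpha)v_{k-1}(t)\big),\quad k\ge1,$$ $$t\frac{d}{dt}v_0(t)=(n+1)\big(v_1(t)-(1+\alpha)v_0(t)\big).$$ More generally, for all $i,k\in\mathbb{Z}_+$ there are constants $\delta^{k,i}_j$, $j=-i,\dots,i$, with $$\Big(t\frac{d}{dt}\Big)^{i}v_k(t)=\sum_{j=-i}^{i}\delta^{k,i}_{j}\,v_{k+j}(t)=\sum_{j=\max\{k-i,0\}}^{k+i}\delta^{k,i}_{j-k}v_j(t),$$ where (i) $\delta^{k,i}_i=(n+1)^i\frac{(k+i)!}{k!}$, and (ii) $|\delta^{k,i}_j|\le C^{i}\frac{(k+i)!}{k!}$ for $j=-i,\dots,i$, with $C>0$ a suitable constant independent of $i,j,k$.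
   Context: $L^{(a)}_k(s)=\sum_{i=0}^{k}(-1)^i\binom{k+a}{k-i}\frac{s^i}{i!}$ denotes the generalized Laguerre polynomial of degree $k$ and parameter $a$. *)

From Stdlib Require Import Reals ZArith Lra.
From Coquelicot Require Import Coquelicot.
Open Scope R_scope.

Fixpoint falling (x : R) (m : nat) : R :=
  match m with
  | O => 1
  | S m' => falling x m' * (x - INR m')
  end.

Definition gbinom (x : R) (m : nat) : R := falling x m / INR (fact m).

Definition laguerre (k : nat) (a s : R) : R :=
  sum_n (fun i => (-1) ^ i * gbinom (INR k + a) (k - i) * s ^ i / INR (fact i)) k.

Definition alpha (n : nat) : R := - / (2 * INR n + 2).

Definition v (n : nat) (l : Z) (t : R) : R :=
  if (l <? 0)%Z then 0
  else exp (- t ^ (2 * n + 2) / (2 * INR n + 2)) *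
       laguerre (Z.to_nat l) (alpha n) (t ^ (2 * n + 2) / (INR n + 1)).

Definition euler (f : R -> R) : R -> R := fun t => t * Derive f t.

Definition euler_iter (i : nat) (f : R -> R) : R -> R := Nat.iter i euler f.

From Stdlib Require Import Reals ZArith Lra Lia.
From Coquelicot Require Import Coquelicot.
Open Scope R_scope.

(* With s = t^(2n+2)/(n+1) we have v_k(t) = e^(-s/2) L_k(s) and t d/dt = (2n+2) s d/ds, so the
   first-order identity is the polynomial identity
     2 s L_k' - s L_k = s L_k' + s L_(k+1)' = (k+1) L_(k+1) - (1+a) L_k - (k+a) L_(k-1),
   which follows from L_(k+1)' = L_k' - L_k (Pascal's rule for the coefficients) and
   s L_(k+1)' = (k+1) L_(k+1) - (k+1+a) L_k (the absorption identity for binomials).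
   Iterating, (t d/dt)^i v_k is a combination of v_(k-i), ..., v_(k+i) whose coefficients obey
   a three-term recursion in i: the top one picks up the factor (n+1)(k+i+1) at each step and
   none grows by more than 6(n+1)(k+i+1), whence the bounds with C = 6(n+1). *)

Lemma falling_succ_shift x m : falling (x + 1) (S m) = (x + 1) * falling x m.
Proof.
  induction m as [|m IH]; [simpl; ring|].
  change (falling (x + 1) (S (S m))) with (falling (x + 1) (S m) * (x + 1 - INR (S m))).
  rewrite IH; simpl falling at 2; rewrite S_INR; ring.
Qed.

Lemma gbinom_pascal x m : gbinom (x + 1) (S m) = gbinom x (S m) + gbinom x m.
Proof.
  unfold gbinom; rewrite falling_succ_shift, fact_simpl, mult_INR, S_INR; simpl falling.
  field; split; [apply INR_fact_neq_0|]; pose proof (pos_INR m); lra.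
Qed.

Lemma gbinom_absorb x m : INR (S m) * gbinom (x + 1) (S m) = (x + 1) * gbinom x m.
Proof.
  unfold gbinom; rewrite falling_succ_shift, fact_simpl, mult_INR.
  field; split; [apply INR_fact_neq_0|]; apply not_0_INR; discriminate.
Qed.

Definition lcoef (a : R) (k i : nat) : R :=
  if (i <=? k)%nat then (-1) ^ i * gbinom (INR k + a) (k - i) / INR (fact i) else 0.

Lemma lcoef_gt a k i : (k < i)%nat -> lcoef a k i = 0.
Proof. intros Hki; unfold lcoef; destruct (Nat.leb_spec i k); [lia | reflexivity]. Qed.

Lemma lcoef_le a k i : (i <= k)%nat ->
  lcoef a k i = (-1) ^ i * gbinom (INR k + a) (k - i) / INR (fact i).
Proof. intros Hik; unfold lcoef; rewrite (proj2 (Nat.leb_le _ _) Hik); reflexivity. Qed.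

Lemma lcoef_pascal a k i :
  INR (S i) * lcoef a (S k) (S i) = INR (S i) * lcoef a k (S i) - lcoef a k i.
Proof.
  destruct (lt_eq_lt_dec i k) as [[Hik | ->] | Hki].
  - rewrite !lcoef_le by lia.
    replace (S k - S i)%nat with (S (k - S i)) by lia.
    replace (k - i)%nat with (S (k - S i)) by lia.
    replace (INR (S k) + a) with (INR k + a + 1) by (rewrite S_INR; ring).
    rewrite gbinom_pascal, fact_simpl, mult_INR, S_INR; simpl pow.
    field; split; [apply INR_fact_neq_0|]; pose proof (pos_INR i); lra.
  - rewrite (lcoef_gt a k (S k)), !lcoef_le by lia.
    rewrite !Nat.sub_diag, fact_simpl, mult_INR; unfold gbinom; cbn [falling fact pow].
    field; repeat split; first [apply INR_fact_neq_0 | apply not_0_INR; discriminate].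
  - rewrite !lcoef_gt by lia; ring.
Qed.

Lemma lcoef_absorb a k i :
  (INR k + 1 - INR i) * lcoef a (S k) i = (INR k + 1 + a) * lcoef a k i.
Proof.
  destruct (le_lt_dec i k) as [Hik | Hki].
  - rewrite !lcoef_le by lia.
    replace (S k - i)%nat with (S (k - i)) by lia.
    replace (INR k + 1 - INR i) with (INR (S (k - i))) by (rewrite S_INR, minus_INR by lia; ring).
    replace (INR (S k) + a) with (INR k + a + 1) by (rewrite S_INR; ring).
    transitivity ((-1) ^ i / INR (fact i) * (INR (S (k - i)) * gbinom (INR k + a + 1) (S (k - i))));
      [unfold Rdiv; ring|].
    rewrite gbinom_absorb; unfold Rdiv; ring.
  - destruct (Nat.eq_dec i (S k)) as [-> | Hne].
    + rewrite (lcoef_gt a k (S k)), S_INR by lia; ring.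
    + rewrite !lcoef_gt by lia; ring.
Qed.

(* Coquelicot states its sum lemmas over an abstract monoid or ring; instantiated at R they
   leave goals that ring and lra do not recognise, hence these R versions. *)
Lemma sum_n_ext_R (u w : nat -> R) N :
  (forall i, (i <= N)%nat -> u i = w i) -> sum_n u N = sum_n w N.
Proof. apply sum_n_ext_loc. Qed.

Lemma sum_n_scal_R (c : R) (u : nat -> R) N : sum_n (fun i => c * u i) N = c * sum_n u N.
Proof. exact (sum_n_mult_l (K := R_Ring) c u N). Qed.

Lemma sum_n_succ_l (u : nat -> R) N :
  sum_n u (S N) = u O + sum_n (fun i => u (S i)) N.
Proof. unfold sum_n; rewrite sum_Sn_m, sum_n_m_S by lia; reflexivity. Qed.

Lemma sum_n_pad (u : nat -> R) N M :
  (N <= M)%nat -> (forall i, (N < i)%nat -> u i = 0) -> sum_n u M = sum_n u N.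
Proof.
  intros HNM Hu; induction HNM as [|M HNM IH]; [reflexivity|].
  rewrite sum_Sn, IH, Hu by lia; apply Rplus_0_r.
Qed.

Lemma sum_n_minus (u w : nat -> R) N :
  sum_n (fun i => u i - w i) N = sum_n u N - sum_n w N.
Proof.
  induction N as [|N IH]; [rewrite !sum_O; reflexivity|].
  rewrite !sum_Sn, IH; unfold plus; simpl; ring.
Qed.

Lemma laguerre_lcoef a k K s : (k <= K)%nat ->
  laguerre k a s = sum_n (fun i => lcoef a k i * s ^ i) K.
Proof.
  intros HkK; rewrite (sum_n_pad _ k K)
    by first [lia | intros i Hi; rewrite lcoef_gt by lia; apply Rmult_0_l].
  unfold laguerre; apply sum_n_ext_R; intros i Hi; rewrite lcoef_le by lia.
  unfold Rdiv; ring.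
Qed.

Lemma is_derive_laguerre a k s :
  is_derive (laguerre k a) s (sum_n (fun i => INR (S i) * lcoef a k (S i) * s ^ i) k).
Proof.
  apply (is_derive_ext (fun s => sum_n (fun i => lcoef a k i * s ^ i) (S k))).
  { intros x; symmetry; apply laguerre_lcoef; lia. }
  replace (sum_n _ k) with (sum_n (fun i => lcoef a k i * (INR i * s ^ pred i)) (S k)).
  - apply (is_derive_sum_n (fun i x => lcoef a k i * x ^ i)); intros i _.
    auto_derive; [trivial | ring].
  - rewrite sum_n_succ_l; change (INR 0) with 0; rewrite Rmult_0_l, Rmult_0_r, Rplus_0_l.
    apply sum_n_ext_R; intros i _; cbn [pred]; ring.
Qed.

Lemma ex_derive_laguerre a k s : ex_derive (laguerre k a) s.
Proof. eexists; apply is_derive_laguerre. Qed.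

Lemma Derive_laguerre a k s :
  Derive (laguerre k a) s = sum_n (fun i => INR (S i) * lcoef a k (S i) * s ^ i) k.
Proof. apply is_derive_unique, is_derive_laguerre. Qed.

Lemma Derive_laguerre_0 a s : Derive (laguerre 0 a) s = 0.
Proof. rewrite Derive_laguerre, sum_O, lcoef_gt by lia; ring. Qed.

Lemma Derive_laguerre_succ a k s :
  Derive (laguerre (S k) a) s = Derive (laguerre k a) s - laguerre k a s.
Proof.
  rewrite !Derive_laguerre, (laguerre_lcoef a k (S k)) by lia.
  rewrite <- (sum_n_pad (fun i => INR (S i) * lcoef a k (S i) * s ^ i) k (S k))
    by (lia || intros; rewrite lcoef_gt by lia; ring).
  rewrite <- sum_n_minus; apply sum_n_ext_R; intros i _.
  rewrite lcoef_pascal; ring.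
Qed.

Lemma laguerre_euler a k s :
  s * Derive (laguerre (S k) a) s =
  (INR k + 1) * laguerre (S k) a s - (INR k + 1 + a) * laguerre k a s.
Proof.
  rewrite Derive_laguerre, (laguerre_lcoef a (S k) (S (S k))), (laguerre_lcoef a k (S (S k)))
    by lia.
  rewrite <- !sum_n_scal_R, <- sum_n_minus; symmetry.
  rewrite (sum_n_ext_R _ (fun i => INR i * lcoef a (S k) i * s ^ i))
    by (intros i _; rewrite <- (Rmult_assoc (INR k + 1 + a)), <- lcoef_absorb; ring).
  rewrite sum_n_succ_l; change (INR 0) with 0; rewrite !Rmult_0_l, Rplus_0_l.
  apply sum_n_ext_R; intros i _; cbn [pow]; ring.
Qed.

Definition laguerre_fun (a : R) (k : nat) (s : R) : R := exp (- s / 2) * laguerre k a s.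

Lemma euler_laguerre_fun a k s :
  ex_derive (laguerre_fun a k) s /\
  2 * s * Derive (laguerre_fun a k) s =
  exp (- s / 2) * (s * Derive (laguerre k a) s + s * Derive (laguerre (S k) a) s).
Proof.
  assert (Hd : is_derive (laguerre_fun a k) s
                 (exp (- s / 2) * (Derive (laguerre k a) s - laguerre k a s / 2))).
  { unfold laguerre_fun; auto_derive; [apply ex_derive_laguerre |].
    change (Derive (fun x => laguerre k a x) s) with (Derive (laguerre k a) s).
    unfold Rdiv; ring. }
  split; [eexists; exact Hd|].
  rewrite (is_derive_unique _ _ _ Hd), Derive_laguerre_succ; field.
Qed.

Lemma euler_comp_monomial (g : R -> R) (p : nat) (c t : R) :
  ex_derive g (t ^ p / c) ->
  ex_derive (fun t => g (t ^ p / c)) t /\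
  t * Derive (fun t => g (t ^ p / c)) t = INR p * (t ^ p / c) * Derive g (t ^ p / c).
Proof.
  intros Hg.
  assert (Hd : is_derive (fun t : R => g (t ^ p / c)) t
                 (INR p * t ^ pred p / c * Derive g (t ^ p / c))).
  { auto_derive; [exact Hg |].
    change (Derive (fun x => g x)) with (Derive g); unfold Rdiv; ring. }
  split; [eexists; exact Hd|].
  rewrite (is_derive_unique _ _ _ Hd).
  destruct p as [|q]; cbn [pred pow]; [change (INR 0) with 0 |]; unfold Rdiv; ring.
Qed.

Lemma v_of_nat n k t :
  v n (Z.of_nat k) t = laguerre_fun (alpha n) k (t ^ (2 * n + 2) / (INR n + 1)).
Proof.
  unfold v, laguerre_fun; rewrite (proj2 (Z.ltb_ge _ _)), Nat2Z.id by lia.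
  f_equal; f_equal; field; pose proof (pos_INR n); lra.
Qed.

Lemma v_neg n l t : (l < 0)%Z -> v n l t = 0.
Proof. intros Hl; unfold v; rewrite (proj2 (Z.ltb_lt _ _) Hl); reflexivity. Qed.

Lemma euler_v_of_nat n k t (s := t ^ (2 * n + 2) / (INR n + 1)) :
  ex_derive (v n (Z.of_nat k)) t /\
  t * Derive (v n (Z.of_nat k)) t =
  (INR n + 1) * (exp (- s / 2) *
    (s * Derive (laguerre k (alpha n)) s + s * Derive (laguerre (S k) (alpha n)) s)).
Proof.
  destruct (euler_laguerre_fun (alpha n) k s) as [Hex Heq].
  destruct (euler_comp_monomial (laguerre_fun (alpha n) k) (2 * n + 2) (INR n + 1) t Hex)
    as [Hex' Heq'].
  split; [exact (ex_derive_ext _ _ t (fun t => eq_sym (v_of_nat n k t)) Hex')|].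
  rewrite (Derive_ext _ _ t (v_of_nat n k)), Heq', <- Heq.
  fold s; rewrite plus_INR, mult_INR; simpl INR; ring.
Qed.

Lemma euler_v n l t :
  ex_derive (v n l) t /\
  t * Derive (v n l) t =
  (INR n + 1) * ((IZR l + 1) * v n (l + 1) t - (1 + alpha n) * v n l t
                 - (IZR l + alpha n) * v n (l - 1) t).
Proof.
  destruct (Z_lt_le_dec l 0) as [Hl | Hl].
  - assert (Hv : forall x, 0 = v n l x) by (intros x; rewrite v_neg; auto).
    split; [exact (ex_derive_ext _ _ t Hv (ex_derive_const 0 t))|].
    rewrite <- (Derive_ext _ _ t Hv), Derive_const, <- (Hv t), (v_neg n (l - 1)) by lia.
    destruct (Z.eq_dec l (-1)) as [-> | Hne]; [simpl; ring|].
    rewrite (v_neg n (l + 1)) by lia; ring.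
  - rewrite <- (Z2Nat.id l Hl), <- INR_IZR_INZ.
    destruct (euler_v_of_nat n (Z.to_nat l) t) as [Hex Heq]; split; [exact Hex|].
    rewrite Heq; clear Heq; destruct (Z.to_nat l) as [|k].
    + rewrite Derive_laguerre_0, laguerre_euler, (v_neg n (Z.of_nat 0 - 1)) by lia.
      change (Z.of_nat 0 + 1)%Z with (Z.of_nat 1).
      rewrite !v_of_nat; unfold laguerre_fun; simpl INR; ring.
    + replace (Z.of_nat (S k) + 1)%Z with (Z.of_nat (S (S k))) by lia.
      replace (Z.of_nat (S k) - 1)%Z with (Z.of_nat k) by lia.
      rewrite !laguerre_euler, !v_of_nat; unfold laguerre_fun; rewrite !S_INR; ring.
Qed.

(* f lo + ... + f (lo + N), i.e. N + 1 terms. *)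
Definition zsum (lo : Z) (N : nat) (f : Z -> R) : R := sum_n (fun m => f (lo + Z.of_nat m)%Z) N.

Lemma zsum_ext lo N f g : (forall j, f j = g j) -> zsum lo N f = zsum lo N g.
Proof. intros Hfg; apply sum_n_ext_R; intros m _; apply Hfg. Qed.

Lemma zsum_shift lo N c f : zsum lo N (fun j => f (j + c)%Z) = zsum (lo + c) N f.
Proof. apply sum_n_ext_R; intros m _; f_equal; lia. Qed.

Lemma zsum_plus lo N f g : zsum lo N (fun j => f j + g j) = zsum lo N f + zsum lo N g.
Proof. exact (sum_n_plus (G := R_AbelianMonoid) _ _ N). Qed.

Lemma zsum_pad_l lo N p f : (forall j, (lo - Z.of_nat p <= j < lo)%Z -> f j = 0) ->
  zsum (lo - Z.of_nat p) (p + N) f = zsum lo N f.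
Proof.
  revert lo; induction p as [|p IH]; intros lo Hf.
  - rewrite Z.sub_0_r; reflexivity.
  - unfold zsum at 1; rewrite Nat.add_succ_l, sum_n_succ_l, Hf by lia; rewrite Rplus_0_l.
    rewrite <- (IH lo) by (intros; apply Hf; lia); unfold zsum.
    apply sum_n_ext_R; intros m _; f_equal; lia.
Qed.

Lemma zsum_pad_r lo N q f : (forall j, (lo + Z.of_nat N < j)%Z -> f j = 0) ->
  zsum lo (N + q) f = zsum lo N f.
Proof. intros Hf; apply sum_n_pad; [lia | intros m Hm; apply Hf; lia]. Qed.

Lemma zsum_widen lo N lo' N' f :
  (lo' <= lo)%Z -> (lo + Z.of_nat N <= lo' + Z.of_nat N')%Z ->
  (forall j, (j < lo \/ lo + Z.of_nat N < j)%Z -> f j = 0) ->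
  zsum lo' N' f = zsum lo N f.
Proof.
  intros Hlo Hhi Hf.
  set (p := Z.to_nat (lo - lo')).
  replace lo' with (lo - Z.of_nat p)%Z by lia.
  replace N' with (p + (N + (N' - p - N)))%nat by lia.
  rewrite zsum_pad_l, zsum_pad_r; [reflexivity | |]; intros; apply Hf; lia.
Qed.

Lemma euler_zsum (F : Z -> R -> R) lo N t : (forall j, ex_derive (F j) t) ->
  ex_derive (fun t => zsum lo N (fun j => F j t)) t /\
  t * Derive (fun t => zsum lo N (fun j => F j t)) t = zsum lo N (fun j => t * Derive (F j) t).
Proof.
  intros HF; unfold zsum; split.
  - apply (ex_derive_sum_n (fun m => F (lo + Z.of_nat m)%Z)); auto.
  - rewrite (Derive_sum_n (fun m => F (lo + Z.of_nat m)%Z)) by auto.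
    symmetry; apply sum_n_scal_R.
Qed.

Definition vanishes_outside (i : nat) (d : Z -> R) : Prop :=
  forall j, (Z.of_nat i < Z.abs j)%Z -> d j = 0.

Lemma zsum_tridiag i (up mid down : Z -> R) :
  vanishes_outside i up -> vanishes_outside i mid -> vanishes_outside i down ->
  zsum (- Z.of_nat (S i)) (2 * S i) (fun j => up (j - 1)%Z + mid j + down (j + 1)%Z) =
  zsum (- Z.of_nat i) (2 * i) (fun j => up j + mid j + down j).
Proof.
  intros Hup Hmid Hdown.
  assert (Hwiden : forall c f, vanishes_outside i f -> (Z.abs c <= 1)%Z ->
            zsum (- Z.of_nat (S i)) (2 * S i) (fun j => f (j + c)%Z) =
            zsum (- Z.of_nat i) (2 * i) f).
  { intros c f Hf Hc; rewrite zsum_shift; apply zsum_widen; [lia | lia |].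
    intros j Hj; apply Hf; lia. }
  rewrite !zsum_plus, <- (Hwiden (-1)%Z up), <- (Hwiden 0%Z mid), <- (Hwiden 1%Z down)
    by (auto; lia).
  rewrite (zsum_ext _ _ (fun j => mid (j + 0)%Z) mid)
    by (intros j; rewrite Z.add_0_r; reflexivity).
  reflexivity.
Qed.

(* The coefficient of v_(k+j) in t d/dt (sum_j d_j v_(k+j)), read off from euler_v;
   euler_coef n k i j is the paper's delta^(k,i)_j. *)
Definition euler_step (n k : nat) (d : Z -> R) (j : Z) : R :=
  (INR n + 1) * (IZR (Z.of_nat k + j) * d (j - 1)%Z - (1 + alpha n) * d j
                 - (IZR (Z.of_nat k + j) + 1 + alpha n) * d (j + 1)%Z).

Definition euler_coef (n k i : nat) : Z -> R :=
  Nat.iter i (euler_step n k) (fun j => if (j =? 0)%Z then 1 else 0).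

Lemma euler_coef_succ n k i : euler_coef n k (S i) = euler_step n k (euler_coef n k i).
Proof. reflexivity. Qed.

Lemma euler_step_vanishes n k i d :
  vanishes_outside i d -> vanishes_outside (S i) (euler_step n k d).
Proof. intros Hd j Hj; unfold euler_step; rewrite !Hd by lia; ring. Qed.

Lemma euler_coef_vanishes n k i : vanishes_outside i (euler_coef n k i).
Proof.
  induction i as [|i IH]; [|apply euler_step_vanishes, IH].
  intros j Hj; cbn; destruct (Z.eqb_spec j 0); [lia | reflexivity].
Qed.

Lemma euler_coef_top n k i :
  euler_coef n k i (Z.of_nat i) = (INR n + 1) ^ i * (INR (fact (k + i)) / INR (fact k)).
Proof.
  induction i as [|i IH].
  - cbn; rewrite Nat.add_0_r; field; apply INR_fact_neq_0.
  - rewrite euler_coef_succ; unfold euler_step.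
    rewrite (euler_coef_vanishes n k i (Z.of_nat (S i))),
      (euler_coef_vanishes n k i (Z.of_nat (S i) + 1)%Z) by lia.
    replace (Z.of_nat (S i) - 1)%Z with (Z.of_nat i) by lia.
    rewrite IH, <- Nat2Z.inj_add, <- INR_IZR_INZ, Nat.add_succ_r, fact_simpl, mult_INR, S_INR.
    simpl pow; field; apply INR_fact_neq_0.
Qed.

Lemma Rabs_alpha_le n : Rabs (alpha n) <= 1.
Proof.
  unfold alpha; rewrite Rabs_Ropp, Rabs_pos_eq; pose proof (pos_INR n).
  - rewrite <- Rinv_1; apply Rinv_le_contravar; lra.
  - left; apply Rinv_0_lt_compat; lra.
Qed.

Lemma euler_step_bound n k i d B j :
  (forall j, Rabs (d j) <= B) -> (Z.abs j <= Z.of_nat (S i))%Z ->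
  Rabs (euler_step n k d j) <= 6 * (INR n + 1) * INR (k + S i) * B.
Proof.
  intros Hd Hj.
  set (K := INR (k + S i)); set (x := IZR (Z.of_nat k + j)).
  assert (HB : 0 <= B) by (eapply Rle_trans; [apply Rabs_pos | apply (Hd 0%Z)]).
  assert (HK : 1 <= K) by (unfold K; rewrite <- INR_1; apply le_INR; lia).
  assert (Hx : Rabs x <= K).
  { unfold x, K; rewrite INR_IZR_INZ, <- abs_IZR; apply IZR_le; lia. }
  pose proof (Rabs_alpha_le n) as Ha.
  assert (Hprod : forall c e, Rabs c <= e -> forall j', Rabs (c * d j') <= e * B).
  { intros c e Hc j'; rewrite Rabs_mult; apply Rmult_le_compat; auto using Rabs_pos. }
  assert (H1 := Hprod x K Hx (j - 1)%Z).
  assert (H2 : Rabs ((1 + alpha n) * d j) <= 2 * B).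
  { apply Hprod; eapply Rle_trans; [apply Rabs_triang | rewrite Rabs_R1; lra]. }
  assert (H3 : Rabs ((x + 1 + alpha n) * d (j + 1)%Z) <= (K + 2) * B).
  { apply Hprod; eapply Rle_trans; [apply Rabs_triang|].
    eapply Rle_trans; [apply Rplus_le_compat_r, Rabs_triang | rewrite Rabs_R1; lra]. }
  unfold euler_step; fold x.
  rewrite Rabs_mult, (Rabs_pos_eq (INR n + 1)) by (pose proof (pos_INR n); lra).
  replace (6 * (INR n + 1) * K * B) with ((INR n + 1) * (6 * K * B)) by ring.
  apply Rmult_le_compat_l; [pose proof (pos_INR n); lra|].
  revert H1 H2 H3.
  generalize (x * d (j - 1)%Z) ((1 + alpha n) * d j) ((x + 1 + alpha n) * d (j + 1)%Z).
  intros u w z H1 H2 H3; unfold Rabs in *; repeat destruct Rcase_abs; nra.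
Qed.

Lemma euler_coef_bound n k i j :
  Rabs (euler_coef n k i j) <= (6 * (INR n + 1)) ^ i * (INR (fact (k + i)) / INR (fact k)).
Proof.
  assert (Hpos : forall m, 0 < (6 * (INR n + 1)) ^ m * (INR (fact (k + m)) / INR (fact k))).
  { intros m; pose proof (pos_INR n); apply Rmult_lt_0_compat; [apply pow_lt; lra|].
    apply Rdiv_lt_0_compat; apply lt_0_INR, lt_O_fact. }
  revert j; induction i as [|i IH]; intros j.
  - rewrite Nat.add_0_r; unfold Rdiv; rewrite Rinv_r, pow_O by apply INR_fact_neq_0.
    cbn; destruct (j =? 0)%Z; [rewrite Rabs_R1 | rewrite Rabs_R0]; lra.
  - destruct (Z_le_gt_dec (Z.abs j) (Z.of_nat (S i))) as [Hj | Hj].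
    + rewrite euler_coef_succ; eapply Rle_trans; [apply euler_step_bound; [apply IH | exact Hj]|].
      right; rewrite Nat.add_succ_r, fact_simpl, mult_INR, <- Nat.add_succ_r; simpl pow.
      field; apply INR_fact_neq_0.
    + rewrite euler_coef_vanishes, Rabs_R0 by lia; left; apply Hpos.
Qed.

Lemma euler_step_zsum n k i d t : vanishes_outside i d ->
  ex_derive (fun t => zsum (- Z.of_nat i) (2 * i) (fun j => d j * v n (Z.of_nat k + j) t)) t /\
  t * Derive (fun t => zsum (- Z.of_nat i) (2 * i) (fun j => d j * v n (Z.of_nat k + j) t)) t =
  zsum (- Z.of_nat (S i)) (2 * S i) (fun j => euler_step n k d j * v n (Z.of_nat k + j) t).
Proof.
  intros Hd.
  set (l := fun j => (Z.of_nat k + j)%Z).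
  set (up := fun j => (INR n + 1) * (IZR (l j) + 1) * d j * v n (l j + 1) t).
  set (mid := fun j => - (INR n + 1) * (1 + alpha n) * d j * v n (l j) t).
  set (down := fun j => - (INR n + 1) * (IZR (l j) + alpha n) * d j * v n (l j - 1) t).
  assert (Hex : forall j, ex_derive (fun t => d j * v n (l j) t) t)
    by (intros j; apply ex_derive_scal, euler_v).
  destruct (euler_zsum (fun j t => d j * v n (l j) t) (- Z.of_nat i) (2 * i) t Hex) as [Hex' Heq].
  split; [exact Hex'|]; rewrite Heq; clear Heq.
  rewrite (zsum_ext _ _ _ (fun j => up j + mid j + down j)).
  2:{ intros j; rewrite Derive_scal, Rmult_comm, Rmult_assoc, (Rmult_comm _ t).
      rewrite (proj2 (euler_v n (l j) t)); unfold up, mid, down; ring. }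
  rewrite <- zsum_tridiag by (intros j Hj; unfold up, mid, down; rewrite Hd by lia; ring).
  apply zsum_ext; intros j; unfold up, mid, down, l, euler_step.
  replace (Z.of_nat k + (j - 1) + 1)%Z with (Z.of_nat k + j)%Z by lia.
  replace (Z.of_nat k + (j + 1) - 1)%Z with (Z.of_nat k + j)%Z by lia.
  replace (IZR (Z.of_nat k + (j - 1))) with (IZR (Z.of_nat k + j) - 1)
    by (rewrite <- minus_IZR; f_equal; lia).
  replace (IZR (Z.of_nat k + (j + 1))) with (IZR (Z.of_nat k + j) + 1)
    by (rewrite <- plus_IZR; f_equal; lia).
  ring.
Qed.

Lemma euler_iter_v n k i t :
  euler_iter i (v n (Z.of_nat k)) t =
  zsum (- Z.of_nat i) (2 * i) (fun j => euler_coef n k i j * v n (Z.of_nat k + j) t).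
Proof.
  revert t; induction i as [|i IH]; intros t.
  - unfold zsum; rewrite sum_O; cbn; rewrite Z.add_0_r; ring.
  - change (euler_iter (S i) (v n (Z.of_nat k)) t)
      with (t * Derive (euler_iter i (v n (Z.of_nat k))) t).
    rewrite (Derive_ext _ _ t IH), euler_coef_succ.
    apply euler_step_zsum, euler_coef_vanishes.
Qed.

Lemma zsum_v_recenter n k i d t :
  zsum (- Z.of_nat i) (2 * i) (fun j => d j * v n (Z.of_nat k + j) t) =
  zsum (Z.of_nat k - Z.of_nat i) (2 * i) (fun l => d (l - Z.of_nat k)%Z * v n l t).
Proof.
  replace (Z.of_nat k - Z.of_nat i)%Z with (- Z.of_nat i + Z.of_nat k)%Z by lia.
  rewrite <- zsum_shift; apply zsum_ext; intros j.
  replace (j + Z.of_nat k - Z.of_nat k)%Z with j by lia; rewrite Z.add_comm; reflexivity.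
Qed.

Lemma zsum_v_truncate n k i d t (lo := Nat.max (k - i) 0) : vanishes_outside i d ->
  zsum (Z.of_nat k - Z.of_nat i) (2 * i) (fun l => d (l - Z.of_nat k)%Z * v n l t) =
  zsum (Z.of_nat lo) (k + i - lo) (fun l => d (l - Z.of_nat k)%Z * v n l t).
Proof.
  intros Hd; apply zsum_widen; [lia | lia |].
  intros l Hl; destruct (Z_lt_le_dec l 0) as [Hneg | Hnneg].
  - rewrite v_neg by exact Hneg; ring.
  - rewrite Hd by lia; ring.
Qed.

Theorem lemma5p1 (n : nat) :
  (* first-order identities *)
  (forall (k : nat) (t : R), (1 <= k)%nat ->
     ex_derive (v n (Z.of_nat k)) t /\
     t * Derive (v n (Z.of_nat k)) t =
       (INR n + 1) * ((INR k + 1) * v n (Z.of_nat k + 1) t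
                      - (1 + alpha n) * v n (Z.of_nat k) t
                      - (INR k + alpha n) * v n (Z.of_nat k - 1) t)) /\
  (forall t : R,
     ex_derive (v n 0) t /\
     t * Derive (v n 0) t = (INR n + 1) * (v n 1 t - (1 + alpha n) * v n 0 t)) /\
  (* higher-order expansion with coefficients delta^{k,i}_j, j = -i..i *)
  (exists C : R, 0 < C /\
     forall i k : nat, exists delta : Z -> R,
       (forall t : R,
          euler_iter i (v n (Z.of_nat k)) t =
            sum_n (fun m => delta (Z.of_nat m - Z.of_nat i)%Z
                            * v n (Z.of_nat k + Z.of_nat m - Z.of_nat i)%Z t) (2 * i)
          /\
          euler_iter i (v n (Z.of_nat k)) t =
            sum_n (fun m => delta (Z.of_nat (Nat.max (k - i) 0 + m) - Z.of_nat k)%Z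
                            * v n (Z.of_nat (Nat.max (k - i) 0 + m)) t)
                  (k + i - Nat.max (k - i) 0)) /\
       delta (Z.of_nat i) = (INR n + 1) ^ i * (INR (fact (k + i)) / INR (fact k)) /\
       (forall j : Z, (- Z.of_nat i <= j <= Z.of_nat i)%Z ->
          Rabs (delta j) <= C ^ i * (INR (fact (k + i)) / INR (fact k)))).
Proof.
  split; [|split].
  - intros k t _; rewrite (INR_IZR_INZ k); apply euler_v.
  - intros t; destruct (euler_v n 0 t) as [Hex Heq]; split; [exact Hex|].
    rewrite Heq, (v_neg n (0 - 1)) by lia; simpl; ring.
  - exists (6 * (INR n + 1)); split; [pose proof (pos_INR n); lra|].
    intros i k; exists (euler_coef n k i).
    split; [|split; [apply euler_coef_top | intros j _; apply euler_coef_bound]].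
    intros t; rewrite euler_iter_v; split.
    + unfold zsum; apply sum_n_ext_R; intros m _.
      replace (- Z.of_nat i + Z.of_nat m)%Z with (Z.of_nat m - Z.of_nat i)%Z by lia.
      replace (Z.of_nat k + (Z.of_nat m - Z.of_nat i))%Z
        with (Z.of_nat k + Z.of_nat m - Z.of_nat i)%Z by lia.
      reflexivity.
    + rewrite zsum_v_recenter, zsum_v_truncate by apply euler_coef_vanishes.
      unfold zsum; apply sum_n_ext_R; intros m _; rewrite Nat2Z.inj_add; reflexivity.
Qed.
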